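(* Let $n\ge1$ and let $r_1,\ldots,r_n$ be distinct nonzero real numbers, labeled so that $r_k>0$ for $1\le k\le p$ and $r_k<0$ for $p+1\le k\le n$, where $0\le p\le n$. Let $V=V(r_1,\ldots,r_n)$ and $V_k=V(r_1,\ldots,r_{k-1},r_{k+1},\ldots,r_n)$ for $1\le k\le n$. Then $$\frac{1}{|r_1r_2\cdots r_n|}=\frac{1}{|V|}\int_0^\infty\Big(\Big|\sum_{k=1}^p(-1)^kV_ke^{-r_kx}\Big|+\Big|\sum_{k=p+1}^n(-1)^kV_ke^{r_kx}\Big|\Big)dx,$$ where an empty sum is $0$ (so for $p=n$ the right-hand side is $\frac{1}{|V|}\int_0^\infty|\sum_{k=1}^n(-1)^kV_ke^{-r_kx}|dx$, and for $p=0$ it is $\frac{1}{|V|}\int_0^\infty|\sum_{k=1}^n(-1)^kV_ke^{r_kx}|dx$).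
   Context: For numbers $x_1,\ldots,x_m$, $V(x_1,\ldots,x_m)=\det(x_j^{i-1})_{1\le i,j\le m}=\prod_{1\le i<j\le m}(x_j-x_i)$ is the Vandermonde determinant (equal to $1$ when $m\le1$). *)

From HB Require Import structures.
From mathcomp Require Import all_boot all_order all_algebra.
From mathcomp Require Import all_classical all_reals all_analysis.
Set Implicit Arguments. Unset Strict Implicit. Unset Printing Implicit Defensive.
Import Order.TTheory GRing.Theory Num.Theory.
Local Open Scope ring_scope.

(* Vandermonde determinant V(x_1,...,x_m) = det (x_j^(i-1))_{i,j}
   (indices 0-based here: entry (i,j) is x_j^i). For m = 0 it is 1. *)
Definition vdm (R : comNzRingType) (m : nat) (x : 'I_m -> R) : R :=
  \det (\matrix_(i < m, j < m) x j ^+ i).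

From HB Require Import structures.
From mathcomp Require Import all_boot all_order all_algebra.
From mathcomp Require Import all_classical all_reals all_analysis.
From mathcomp Require Import zify ring.
Import Order.TTheory GRing.Theory Num.Theory.
Set Implicit Arguments.
Unset Strict Implicit.
Unset Printing Implicit Defensive.
Local Open Scope ring_scope.

(* Put w_S(k) = 1 / prod_{j in S, j <> k} (r_j - r_k) and P_S = prod_{j in S} r_j.
   Expanding the Vandermonde determinant at r_k gives (-1)^(k-1) V_k = V w(k), so up to
   the factor |V| / |P| the integrand is |A(x)| + |B(x)| with
   P A(x) = sum_{r_k > 0} P w(k) e^{-r_k x} and P B(x) = sum_{r_k < 0} P w(k) e^{r_k x}.
   The heart of the proof is that P_S A_S >= 0 and P_S B_S <= 0 on [0, +oo) for every
   S, by induction on S: when a point i is added to S, the derivative of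
   e^{r_i x} P_S A_S(x) is r_i e^{r_i x} times the same expression for the smaller
   set.  If r_i < 0 this function decreases to 0; if r_i > 0 it increases from
   P_S A_S(0) = - P_S B_S(0) >= 0, because the weights w_S sum to 0.  The symmetry
   r -> -r exchanges A and B.  Knowing the signs, the integrand is a positive
   combination of decaying exponentials, and integrating it termwise leaves
   P sum_k w(k) / r_k, which is 1 by the partial fraction expansion of
   1 / prod_j (r_j - a) at a = 0. *)

Lemma setU1_ind (T : finType) (P : {set T} -> Prop) :
  P finset.set0 -> (forall (i : T) (S : {set T}), i \notin S -> P S -> P (i |: S)) ->
  forall S, P S.
Proof.
move=> P0 PU S; elim: {S}#|S| {-2}S (erefl #|S|) => [|m IH] S cS.
  by rewrite (cards0_eq cS).
have /set0Pn[i iS] : S != finset.set0 by rewrite -card_gt0 cS.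
rewrite -(finset.setD1K iS); apply: PU; first by rewrite !inE eqxx.
by apply: IH; move: cS; rewrite (cardsD1 i) iS => -[].
Qed.

Section PartialFractions.
Variables (F : fieldType) (n : nat) (r : 'I_n -> F).
Implicit Types (S : {set 'I_n}) (i k : 'I_n).

Definition lagrange_weight S k := (\prod_(j in S :\ k) (r j - r k))^-1.

Hypothesis r_inj : injective r.

Lemma subr_neq0_inj i k : i != k -> r i - r k != 0.
Proof. by apply: contraNneq => /eqP; rewrite subr_eq0 => /eqP /r_inj ->. Qed.

Lemma lagrange_weight_set1 k : lagrange_weight [set k] k = 1.
Proof. by rewrite /lagrange_weight finset.setDv big_set0 invr1. Qed.

Lemma lagrange_weight_setU1 i S k : i \notin S -> k \in S ->
  lagrange_weight (i |: S) k = lagrange_weight S k / (r i - r k).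
Proof.
move=> iS kS; have ik : i != k by apply: contraNneq iS => ->.
rewrite /lagrange_weight; have -> : (i |: S) :\ k = i |: (S :\ k).
  by apply/setP => j; rewrite !inE; case: (eqVneq j i) => // ->; rewrite (negPf ik).
by rewrite big_setU1 ?inE ?(negPf iS) ?andbF //= invfM mulrC.
Qed.

Lemma lagrange_weight_setU1_self i S : i \notin S ->
  lagrange_weight (i |: S) i = (\prod_(j in S) (r j - r i))^-1.
Proof. by move=> iS; rewrite /lagrange_weight setU1K. Qed.

Lemma partial_fractions S a : S != finset.set0 -> (forall j, j \in S -> r j != a) ->
  \sum_(k in S) lagrange_weight S k / (r k - a) = (\prod_(j in S) (r j - a))^-1.
Proof.
elim/setU1_ind: S a => [|i S iS IH] a; first by rewrite eqxx.
move=> _ ra; have [-> | S_ne0] := eqVneq S finset.set0.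
  by rewrite finset.setU0 !big_set1 lagrange_weight_set1 div1r.
have ra_i : r i - a != 0 by rewrite subr_eq0 ra ?setU11.
have ra_S j : j \in S -> r j != a by move=> jS; rewrite ra // setU1r.
have ri_S j : j \in S -> r j != r i.
  by move=> jS; rewrite -subr_eq0 subr_neq0_inj //; apply: contraNneq iS => <-.
have split_k k : k \in S -> lagrange_weight (i |: S) k / (r k - a) =
    (r i - a)^-1 * (lagrange_weight S k / (r k - a) - lagrange_weight S k / (r k - r i)).
  move=> kS; rewrite lagrange_weight_setU1 //.
  have rk_a : r k - a != 0 by rewrite subr_eq0 ra_S.
  have rk_i : r k - r i != 0 by rewrite subr_eq0 ri_S.
  have ri_k : r i - r k != 0 by rewrite -opprB oppr_eq0.
  by field; rewrite ra_i rk_a rk_i ri_k.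
rewrite !big_setU1 //= lagrange_weight_setU1_self // (eq_bigr _ split_k).
rewrite -mulr_sumr sumrB IH // IH //.
have P_a : \prod_(j in S) (r j - a) != 0.
  by apply/prodf_neq0 => j jS; rewrite subr_eq0 ra_S.
have P_i : \prod_(j in S) (r j - r i) != 0.
  by apply/prodf_neq0 => j jS; rewrite subr_eq0 ri_S.
by field; rewrite ra_i P_a P_i.
Qed.

Lemma sum_lagrange_weight S : (1 < #|S|)%N -> \sum_(k in S) lagrange_weight S k = 0.
Proof.
move=> S_gt1; have /set0Pn[i iS] : S != finset.set0 by rewrite -card_gt0 ltnW.
have S'_ne0 : S :\ i != finset.set0 by move: S_gt1; rewrite (cardsD1 i) iS -card_gt0.
rewrite -(finset.setD1K iS) big_setU1 ?setD11 //= lagrange_weight_setU1_self ?setD11 //.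
have -> : \sum_(k in S :\ i) lagrange_weight (i |: S :\ i) k =
    - \sum_(k in S :\ i) lagrange_weight (S :\ i) k / (r k - r i).
  rewrite -sumrN; apply: eq_bigr => k kS.
  by rewrite lagrange_weight_setU1 ?setD11 // -mulrN -invrN opprB.
rewrite partial_fractions ?subrr // => j; rewrite !inE => /andP[ji _].
by rewrite -subr_eq0 subr_neq0_inj.
Qed.

End PartialFractions.

Lemma vdm_prod (R : comNzRingType) m (x : 'I_m -> R) :
  vdm x = \prod_(i < m) \prod_(j < m | (i < j)%N) (x j - x i).
Proof.
have := det_Vandermonde (\row_j x j).
under eq_bigr do under eq_bigr do rewrite !mxE.
by move=> <-; congr (\det _); apply/matrixP => i j; rewrite !mxE.
Qed.

Section Vandermonde.
Variables (R : comNzRingType) (n : nat).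
Implicit Types (x : 'I_n -> R) (k : 'I_n) (i j : 'I_n.-1).

Lemma lift_ltn k i j : (lift k i < lift k j)%N = (i < j)%N.
Proof. by rewrite /= !ltnNge leq_bump2. Qed.

Lemma lift_ltn_pivot k i : (lift k i < k)%N = (i < k)%N.
Proof. by rewrite /= /bump; case: leqP => ki /=; lia. Qed.

Lemma pivot_ltn_lift k i : (k < lift k i)%N = ~~ (i < k)%N.
Proof. by rewrite /= /bump; case: leqP => ki /=; lia. Qed.

Lemma prodr_const_ltn_ord (a : R) k : \prod_(i < n.-1 | (i < k)%N) a = a ^+ k.
Proof.
have k_le : (k <= n.-1)%N by case: n k => [[]|m] [].
by rewrite (big_ord_narrow k_le) prodr_const card_ord.
Qed.

Lemma vdm_lift x k : vdm x =
  (-1) ^+ k * vdm (fun i => x (lift k i)) * \prod_(i < n.-1) (x (lift k i) - x k).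
Proof.
have row_k : \prod_(j < n | (k < j)%N) (x j - x k) =
    \prod_(i < n.-1 | ~~ (i < k)%N) (x (lift k i) - x k).
  rewrite big_mkcond (bigD1_ord k) //= ltnn mul1r [RHS]big_mkcond.
  by apply: eq_bigr => i _; rewrite pivot_ltn_lift.
have row_i i : \prod_(j < n | (lift k i < j)%N) (x j - x (lift k i)) =
    (if (i < k)%N then x k - x (lift k i) else 1) *
    \prod_(j < n.-1 | (i < j)%N) (x (lift k j) - x (lift k i)).
  rewrite big_mkcond (bigD1_ord k) //= lift_ltn_pivot [in RHS]big_mkcond.
  by congr (_ * _); apply: eq_bigr => j _; rewrite lift_ltn.
rewrite !vdm_prod (bigD1_ord k) //= row_k (eq_bigr _ (fun i _ => row_i i)).
rewrite big_split /= -big_mkcond /=.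
under [X in _ * (X * _)]eq_bigr do rewrite -opprB -mulN1r.
rewrite big_split /= prodr_const_ltn_ord [X in _ = _ * X](bigID (fun i => (i < k)%N)) /=.
by ring.
Qed.

Lemma prod_setTD1_lift (F : 'I_n -> R) k :
  \prod_(l in [set: 'I_n] :\ k) F l = \prod_(i < n.-1) F (lift k i).
Proof.
rewrite (eq_bigl (fun l => l != k)) => [|l]; last by rewrite !inE andbT.
by rewrite big_mkcond (bigD1_ord k) //= eqxx mul1r; under eq_bigr do rewrite eq_sym neq_lift.
Qed.

End Vandermonde.

Lemma vdm_neq0 (R : idomainType) m (x : 'I_m -> R) : injective x -> vdm x != 0.
Proof.
move=> x_inj; rewrite vdm_prod; apply/prodf_neq0 => i _; apply/prodf_neq0 => j ij.
by rewrite subr_eq0; apply: contraTneq ij => /x_inj ->; rewrite ltnn.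
Qed.

Lemma vdm_lift_sign (F : fieldType) n (x : 'I_n -> F) (k : 'I_n) : injective x ->
  (-1) ^+ k.+1 * vdm (fun i => x (lift k i)) =
  - (vdm x * lagrange_weight x [set: 'I_n] k).
Proof.
move=> x_inj; rewrite (vdm_lift x k) /lagrange_weight prod_setTD1_lift mulfK.
  by rewrite exprS mulN1r mulNr.
by apply/prodf_neq0 => i _; rewrite subr_neq0_inj // eq_sym neq_lift.
Qed.

Section ExpSum.
Import numFieldNormedType.Exports.
Local Open Scope classical_set_scope.
Context {R : realType} {m : nat}.
Implicit Types (c d : 'I_m -> R) (a x : R).

Definition expsum c d x := \sum_(k < m) c k * expR (d k * x).

Lemma expsum0 c d : expsum c d 0 = \sum_(k < m) c k.
Proof. by apply: eq_bigr => k _; rewrite mulr0 expR0 mulr1. Qed.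

Lemma expsumD c1 c2 d x :
  expsum (fun k => c1 k + c2 k) d x = expsum c1 d x + expsum c2 d x.
Proof. by rewrite -big_split; apply: eq_bigr => k _; rewrite mulrDl. Qed.

Lemma expsumZ a c d x : expsum (fun k => a * c k) d x = a * expsum c d x.
Proof. by rewrite mulr_sumr; apply: eq_bigr => k _; rewrite mulrA. Qed.

Lemma expsum_shift a c d x :
  expsum c (fun k => a + d k) x = expR (a * x) * expsum c d x.
Proof.
rewrite mulr_sumr; apply: eq_bigr => k _.
by rewrite mulrDl expRD mulrCA.
Qed.

Lemma is_derive_expsum c d x :
  is_derive x 1 (expsum c d) (expsum (fun k => c k * d k) d x).
Proof.
have -> : expsum c d = \sum_(k < m) (fun y => c k * expR (d k * y)).
  by apply/funext => y; rewrite fct_sumE.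
apply: is_derive_sum => k.
have dlin : is_derive x 1 (fun y : R => d k * y) (d k).
  by have := is_deriveZ (d k) (is_derive_id x (1 : R)); rewrite /GRing.scale/= mulr1.
have := is_deriveZ (c k) (is_derive1_comp (is_derive_expR (d k * x)) dlin).
by rewrite [c k * d k * _]mulrAC -mulrA.
Qed.

Lemma derivable_expsum c d x : derivable (expsum c d) x 1.
Proof. have dx := is_derive_expsum c d x; exact: ex_derive. Qed.

Lemma derive1_expsum c d x :
  derive1 (expsum c d) x = expsum (fun k => c k * d k) d x.
Proof. by have dx := is_derive_expsum c d x; rewrite derive1E derive_val. Qed.

Lemma continuous_expsum c d : continuous (expsum c d).
Proof.
move=> x; apply: differentiable_continuous.
exact/derivable1_diffP/derivable_expsum.
Qed.

Lemma cvgy_expR_mul (b : R) : b < 0 -> (expR (b * x) @[x --> +oo] --> 0).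
Proof.
move=> b_lt0; apply/cvgrPdist_le => e e0; near=> x.
rewrite sub0r normrN ger0_norm ?expR_ge0 // -[b]opprK mulNr expRN.
rewrite -[leRHS]invrK lef_pV2 ?posrE ?expR_gt0 ?invr_gt0 //.
rewrite (le_trans _ (expR_ge1Dx _)) // -lerBlDl -ler_pdivrMl ?oppr_gt0 //.
Unshelve. end_near. Qed.

Lemma expsum_cvgy c d : (forall k, c k != 0 -> d k < 0) ->
  (expsum c d x @[x --> +oo] --> 0).
Proof.
move=> cd.
suff : expsum c d x @[x --> +oo] --> \sum_(k < m) c k * 0.
  by rewrite big1 // => k _; rewrite mulr0.
apply: cvg_big => [|k _]; first exact: add_continuous.
have [->|/cd/cvgy_expR_mul ck] := eqVneq (c k) 0.
  by rewrite mul0r; apply: cvg_near_cst; apply: nearW => y; rewrite mul0r.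
exact: cvgMl_tmp.
Qed.

Lemma expsum_ge0 c d : (forall k, c k != 0 -> d k < 0) ->
  (forall t, 0 < t -> expsum (fun k => c k * d k) d t <= 0) ->
  forall x, 0 <= x -> 0 <= expsum c d x.
Proof.
move=> cd dle0 x x0; have cvg0 := expsum_cvgy cd.
rewrite -(cvg_lim _ cvg0) //; apply: limr_le; first exact: cvgP cvg0.
near=> y; apply: (@ler0_derive1_nincry _ _ 0) => // [t _|t|].
- exact: derivable_expsum.
- by rewrite in_itv /= andbT derive1_expsum; exact: dle0.
- exact/continuous_subspaceT/continuous_expsum.
Unshelve. end_near. Qed.

Lemma expsum0_le c d :
  (forall t, 0 < t -> 0 <= expsum (fun k => c k * d k) d t) ->
  forall x, 0 <= x -> expsum c d 0 <= expsum c d x.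
Proof.
move=> dge0 x x0; apply: (@ger0_derive1_ndecry _ _ 0) => // [t _|t|].
- exact: derivable_expsum.
- by rewrite in_itv /= andbT derive1_expsum; exact: dge0.
- exact/continuous_subspaceT/continuous_expsum.
Qed.

Lemma integral_expsum c d : (forall k, d k < 0) ->
  (forall x, 0 <= x -> 0 <= expsum c d x) ->
  (\int[lebesgue_measure]_(x in `[0%R, +oo[) (expsum c d x)%:E =
     (- \sum_(k < m) c k / d k)%:E)%E.
Proof.
move=> d_lt0 ge0; rewrite -sub0r EFinB -(expsum0 (fun k => c k / d k) d).
apply: ge0_continuous_FTC2y => //.
- exact/continuous_subspaceT/continuous_expsum.
- by apply: expsum_cvgy => k _; exact: d_lt0.
- by move=> x _; exact: derivable_expsum.
- exact/cvg_at_right_filter/continuous_expsum.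
- move=> x _; rewrite derive1_expsum.
  by apply: eq_bigr => k _; rewrite divfK ?ltr0_neq0.
Qed.

End ExpSum.

Section PositivePart.
Variables (R : realType) (n : nat).
Implicit Types (r : 'I_n -> R) (S : {set 'I_n}) (i k : 'I_n) (x : R).

Definition posexp_coef r S k : R :=
  if (k \in S) && (0 < r k) then (\prod_(j in S) r j) * lagrange_weight r S k else 0.

(* [posexp r S] is P_S A_S; [posexp (fun j => - r j) S] is - P_S B_S (see posexp_oppE). *)
Definition posexp r S := expsum (posexp_coef r S) (fun k => - r k).

Lemma posexpE r S x : posexp r S x =
  \sum_(k in S | 0 < r k) (\prod_(j in S) r j) * lagrange_weight r S k * expR (- r k * x).
Proof.
rewrite /posexp /expsum [RHS]big_mkcond; apply: eq_bigr => k _.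
by rewrite /posexp_coef; case: ifP => //; rewrite mul0r.
Qed.

Lemma posexp_set0 r : posexp r finset.set0 = fun=> 0.
Proof.
apply/funext => x; rewrite /posexp /expsum big1 // => k _.
by rewrite /posexp_coef inE mul0r.
Qed.

Lemma posexp_coef_setU1 r i S k : injective r -> i \notin S ->
  posexp_coef r (i |: S) k * (r i - r k) = r i * posexp_coef r S k.
Proof.
move=> r_inj iS; rewrite /posexp_coef in_setU1.
have [-> | ki] := eqVneq k i; first by rewrite (negPf iS) subrr !mulr0.
case: ifP => [/andP[kS _] | _]; last by rewrite mul0r mulr0.
rewrite big_setU1 //= lagrange_weight_setU1 //.
by field; rewrite subr_neq0_inj // eq_sym.
Qed.

(* The derivative of [x |-> expR (r i * x) * posexp r (i |: S) x]. *)
Lemma derive_shifted_posexp_setU1 r i S x : injective r -> i \notin S ->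
  expsum (fun k => posexp_coef r (i |: S) k * (r i - r k)) (fun k => r i - r k) x =
  r i * (expR (r i * x) * posexp r S x).
Proof.
move=> r_inj iS; rewrite -expsum_shift -expsumZ.
by congr expsum; apply/funext => k; rewrite posexp_coef_setU1.
Qed.

Lemma posexp_setU1_ge0_neg r i S : injective r -> i \notin S -> r i < 0 ->
  (forall x, 0 <= x -> 0 <= posexp r S x) ->
  forall x, 0 <= x -> 0 <= posexp r (i |: S) x.
Proof.
move=> r_inj iS ri_lt0 S_ge0 x x0.
rewrite -(pmulr_rge0 _ (expR_gt0 (r i * x))) /posexp -expsum_shift.
apply: expsum_ge0 => // [k | t t0].
  rewrite /posexp_coef; case: ifP => [/andP[_ rk_gt0] _ | _]; last by rewrite eqxx.
  by rewrite subr_lt0 (lt_trans ri_lt0).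
rewrite derive_shifted_posexp_setU1 // nmulr_rle0 //.
by rewrite mulr_ge0 ?expR_ge0 ?S_ge0 ?ltW.
Qed.

Lemma posexp_setU1_ge0_pos r i S : injective r -> i \notin S -> 0 < r i ->
  (forall x, 0 <= x -> 0 <= posexp r S x) -> 0 <= posexp r (i |: S) 0 ->
  forall x, 0 <= x -> 0 <= posexp r (i |: S) x.
Proof.
move=> r_inj iS ri_gt0 S_ge0 at0 x x0.
rewrite -(pmulr_rge0 _ (expR_gt0 (r i * x))) /posexp -expsum_shift.
apply: le_trans (expsum0_le _ x0) => [|t t0].
  by rewrite expsum_shift mulr0 expR0 mul1r.
rewrite derive_shifted_posexp_setU1 // pmulr_rge0 //.
by rewrite mulr_ge0 ?expR_ge0 ?S_ge0 ?ltW.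
Qed.

Lemma posexp_coef_opp r S k : posexp_coef (fun j => - r j) S k =
  - (if (k \in S) && (r k < 0) then (\prod_(j in S) r j) * lagrange_weight r S k else 0).
Proof.
rewrite /posexp_coef oppr_gt0; case: ifP => [/andP[kS _] | _]; last by rewrite oppr0.
rewrite /lagrange_weight prodrN; under [X in _ / X]eq_bigr do rewrite -opprD.
rewrite prodrN invr_signM (cardsD1 k S) kS exprS.
by rewrite mulrACA -[-1 * _ * _]mulrA -expr2 sqrr_sign mulr1 mulN1r.
Qed.

Lemma posexp_oppE r S x : posexp (fun j => - r j) S x =
  - \sum_(k in S | r k < 0) (\prod_(j in S) r j) * lagrange_weight r S k * expR (r k * x).
Proof.
rewrite /posexp /expsum -sumrN [RHS]big_mkcond; apply: eq_bigr => k _.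
rewrite posexp_coef_opp opprK; case: ifP => _; first by rewrite mulNr.
by rewrite oppr0 mul0r.
Qed.

Lemma posexp0_opp r S : injective r -> (forall k, r k != 0) -> (1 < #|S|)%N ->
  posexp r S 0 = posexp (fun j => - r j) S 0.
Proof.
move=> r_inj r_neq0 S_gt1; apply/eqP; rewrite -subr_eq0 /posexp !expsum0 -sumrB.
have -> : \sum_(k < n) (posexp_coef r S k - posexp_coef (fun j => - r j) S k) =
    \sum_(k in S) (\prod_(j in S) r j) * lagrange_weight r S k.
  rewrite [RHS]big_mkcond; apply: eq_bigr => k _.
  rewrite posexp_coef_opp opprK /posexp_coef; case: (k \in S) => /=; last by rewrite addr0.
  have [rk_lt0 | rk_gt0 | /eqP] := ltgtP (r k) 0; last by rewrite (negPf (r_neq0 k)).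
    by rewrite add0r.
  by rewrite addr0.
by rewrite -mulr_sumr sum_lagrange_weight // mulr0.
Qed.

Theorem posexp_ge0 S : forall r, injective r -> (forall k, r k != 0) ->
  forall x, 0 <= x -> 0 <= posexp r S x.
Proof.
elim/setU1_ind: S => [r _ _ x _ | i S iS IH r r_inj r_neq0]; first by rewrite posexp_set0.
have ropp_inj : injective (fun j => - r j) by move=> j l /oppr_inj /r_inj.
have ropp_neq0 (k : 'I_n) : - r k != 0 by rewrite oppr_eq0.
have [ri_lt0 | ri_gt0 | /eqP] := ltgtP (r i) 0; last by rewrite (negPf (r_neq0 i)).
  exact: posexp_setU1_ge0_neg r_inj iS ri_lt0 (IH r r_inj r_neq0).
apply: (posexp_setU1_ge0_pos r_inj iS ri_gt0 (IH r r_inj r_neq0)).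
have [-> | S_ne0] := eqVneq S finset.set0.
  rewrite finset.setU0 posexpE big_mkcondr big_set1 ri_gt0 big_set1.
  by rewrite lagrange_weight_set1 mulr1 mulr0 expR0 mulr1 ltW.
(* The initial value is that of the reflected family, in which the new point is negative. *)
rewrite posexp0_opp ?cardsU1 ?iS ?ltnS ?card_gt0 //.
by apply: (posexp_setU1_ge0_neg ropp_inj iS _ (IH _ ropp_inj ropp_neq0)); rewrite ?oppr_lt0.
Qed.

Lemma posexp_opp_ge0 r S : injective r -> (forall k, r k != 0) ->
  forall x, 0 <= x -> 0 <= posexp (fun j => - r j) S x.
Proof.
move=> r_inj r_neq0; apply: posexp_ge0 => [j l /oppr_inj /r_inj // | k].
by rewrite oppr_eq0.
Qed.

Lemma posexp_add_opp r S x :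
  posexp r S x + posexp (fun j => - r j) S x =
  expsum (fun k => posexp_coef r S k + posexp_coef (fun j => - r j) S k)
         (fun k => - `|r k|) x.
Proof.
have norm_exp r' k : posexp_coef r' S k * expR (- r' k * x) =
    posexp_coef r' S k * expR (- `|r' k| * x).
  by rewrite /posexp_coef; case: ifP => [/andP[_ /gtr0_norm ->] | _] //; rewrite !mul0r.
rewrite expsumD /posexp /expsum; congr (_ + _); apply: eq_bigr => k _.
  exact: norm_exp.
by rewrite norm_exp normrN.
Qed.

Lemma sum_posexp_coef_div_norm r S : injective r -> (forall k, r k != 0) ->
  S != finset.set0 ->
  \sum_(k < n) (posexp_coef r S k + posexp_coef (fun j => - r j) S k) / `|r k| = 1.
Proof.
move=> r_inj r_neq0 S_ne0.
have term k : (posexp_coef r S k + posexp_coef (fun j => - r j) S k) / `|r k| =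
    if k \in S then (\prod_(j in S) r j) * (lagrange_weight r S k / (r k - 0)) else 0.
  rewrite posexp_coef_opp /posexp_coef subr0 mulrA.
  case: (k \in S) => /=; last by rewrite oppr0 addr0 mul0r.
  have [rk_lt0 | rk_gt0 | /eqP] := ltgtP (r k) 0; last by rewrite (negPf (r_neq0 k)).
    by rewrite add0r ltr0_norm // invrN mulrNN.
  by rewrite oppr0 addr0 gtr0_norm.
rewrite (eq_bigr _ (fun k _ => term k)) -big_mkcond /= -mulr_sumr.
rewrite partial_fractions //.
have -> : \prod_(j in S) (r j - 0) = \prod_(j in S) r j.
  by apply: eq_bigr => j _; rewrite subr0.
by rewrite divff //; apply/prodf_neq0 => j _.
Qed.

Lemma integral_posexp_add_opp r S a : injective r -> (forall k, r k != 0) ->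
  S != finset.set0 -> 0 <= a ->
  (\int[lebesgue_measure]_(x in `[0%R, +oo[)
     (a * (posexp r S x + posexp (fun j => - r j) S x))%:E = a%:E)%E.
Proof.
move=> r_inj r_neq0 S_ne0 a_ge0.
under eq_integral do rewrite posexp_add_opp -expsumZ.
rewrite integral_expsum => [|k|x x0].
- congr (_%:E); rewrite -sumrN -[RHS]mulr1 -(sum_posexp_coef_div_norm r_inj r_neq0 S_ne0).
  by rewrite mulr_sumr; apply: eq_bigr => k _; rewrite invrN mulrN opprK mulrA.
- by rewrite oppr_lt0 normr_gt0.
- rewrite expsumZ -posexp_add_opp mulr_ge0 // addr_ge0 //.
    exact: posexp_ge0.
  exact: posexp_opp_ge0.
Qed.

End PositivePart.

Section SignedMinors.
Variables (R : realType) (n : nat) (r : 'I_n -> R).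
Hypotheses (r_inj : injective r) (r_neq0 : forall k, r k != 0).

Let T := [set: 'I_n]%SET.
Let P := \prod_(j in T) r j.

Let P_neq0 : P != 0.
Proof. exact/prodf_neq0. Qed.

Lemma sum_signed_minors_pos x :
  \sum_(k < n | 0 < r k) (-1) ^+ k.+1 * vdm (fun j => r (lift k j)) * expR (- r k * x) =
  - (vdm r / P) * posexp r T x.
Proof.
rewrite posexpE mulr_sumr; apply: eq_big => k; first by rewrite inE.
by move=> _; rewrite vdm_lift_sign // -/P; field.
Qed.

Lemma sum_signed_minors_neg x :
  \sum_(k < n | r k < 0) (-1) ^+ k.+1 * vdm (fun j => r (lift k j)) * expR (r k * x) =
  vdm r / P * posexp (fun j => - r j) T x.
Proof.
rewrite posexp_oppE mulrN -mulNr mulr_sumr; apply: eq_big => k; first by rewrite inE.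
by move=> _; rewrite vdm_lift_sign // -/P; field.
Qed.

Lemma norm_sum_signed_minors x : 0 <= x ->
  `|\sum_(k < n | 0 < r k) (-1) ^+ k.+1 * vdm (fun j => r (lift k j)) * expR (- r k * x)|
  + `|\sum_(k < n | r k < 0) (-1) ^+ k.+1 * vdm (fun j => r (lift k j)) * expR (r k * x)|
  = `|vdm r| / `|\prod_(k < n) r k| * (posexp r T x + posexp (fun j => - r j) T x).
Proof.
move=> x0; rewrite sum_signed_minors_pos sum_signed_minors_neg.
have -> : \prod_(k < n) r k = P by apply: eq_bigl => k; rewrite inE.
rewrite !(normrN, normrM, normfV) (ger0_norm (posexp_ge0 T r_inj r_neq0 x0)).
by rewrite (ger0_norm (posexp_opp_ge0 T r_inj r_neq0 x0)) mulrDr.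
Qed.

End SignedMinors.

Local Open Scope classical_set_scope.

Theorem proposition1 (R : realType) (n p : nat) (r : 'I_n -> R)
  (hn : (1 <= n)%N) (hp : (p <= n)%N)
  (hinj : injective r) (hnz : forall k, r k != 0)
  (hpos : forall k : 'I_n, (k < p)%N -> 0 < r k)
  (hneg : forall k : 'I_n, (p <= k)%N -> r k < 0) :
  ((`|\prod_(k < n) r k|)^-1)%:E =
  (((`|vdm r|)^-1)%:E *
  \int[lebesgue_measure]_(x in `[0%R, +oo[)
     (`| \sum_(k < n | (k < p)%N)
            (-1) ^+ k.+1 * vdm (fun j : 'I_n.-1 => r (lift k j)) * expR (- r k * x) |
      + `| \sum_(k < n | (p <= k)%N)
            (-1) ^+ k.+1 * vdm (fun j : 'I_n.-1 => r (lift k j)) * expR (r k * x) |)%:E)%E.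
Proof.
have lt_p (k : 'I_n) : (k < p)%N = (0 < r k).
  by case: ltnP => [/hpos -> // | /hneg /lt_gtF ->].
have le_p (k : 'I_n) : (p <= k)%N = (r k < 0).
  by rewrite leqNgt lt_p -leNgt le_eqVlt (negPf (hnz k)).
under eq_integral => x.
  rewrite inE /= in_itv /= andbT => x0.
  rewrite (eq_bigl _ _ lt_p) (eq_bigl _ _ le_p) norm_sum_signed_minors //.
  over.
rewrite integral_posexp_add_opp ?divr_ge0 //; last by rewrite -card_gt0 cardsT card_ord.
by rewrite -EFinM mulrA mulVf ?mul1r // normr_eq0 vdm_neq0.
Qed.
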